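(* Let $k\ge 1$, $n=2k$, and let $C=(c_{ij})$ be a symmetric $n\times n$ relaxed Van der Veen matrix, i.e. \[ c_{j+1,j}+c_{lm}-c_{jl}-c_{j+1,m}\le 0 \] for all $j,l,m$ with $1\le j<j+1<l\le n$, $j+1<m\le n$, $j\equiv m \pmod 2$ and $j+1\equiv l\pmod 2$. Then the even-odd BTSP with distance matrix $C$ is pyramidally solvable, i.e. there is an optimal feasible tour which is pyramidal.
   Context: A tour on $\{1,\ldots,n\}$ is a cyclic permutation $\tau$ of $\{1,\ldots,n\}$; its length is $c(\tau)=\sum_{i=1}^n c_{i\tau(i)}$. In the bipartite TSP (BTSP), given a symmetric $n\times n$ matrix $C$ ($n=2k$) and a partition of the cities into $K_1,K_2$ with $|K_1|=|K_2|=k$, a feasible tour is a tour $\tau$ such that $\tau(i),\tau^{-1}(i)\in K_2$ for all $i\in K_1$ and $\tau(i),\tau^{-1}(i)\in K_1$ for all $i\in K_2$; the goal is a feasible tour of minimum length. The even-odd BTSP is the case $K_1=\{1,3,\ldots,2k-1\}$ and $K_2=\{2,4,\ldots,2k\}$. A tour $\tau=\langle 1,\tau_2,\ldots,\tau_m,n,\tau_{m+2},\ldots,\tau_{n},1\rangle$ (the cyclic sequence of visited cities starting at city 1) is pyramidal if $1<\tau_2<\cdots<\tau_m<n$ and $n>\tau_{m+2}>\cdots>\tau_{n}>1$. An instance is pyramidally solvable if an optimal solution can be found within the set of pyramidal tours. *)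

(* Cities 1..n are represented by the ordinals 'I_n,
   city number c corresponds to the ordinal c-1. *)
From HB Require Import structures.
From mathcomp Require Import all_boot all_order all_algebra all_fingroup.
Set Implicit Arguments. Unset Strict Implicit. Unset Printing Implicit Defensive.
Import Order.TTheory GRing.Theory Num.Theory.
Local Open Scope ring_scope.

Definition is_tour (n : nat) (t : {perm 'I_n}) : Prop :=
  forall x : 'I_n, porbit t x = [set: 'I_n].

Definition tour_len (R : numDomainType) (n : nat) (C : 'M[R]_n) (t : {perm 'I_n}) : R :=
  \sum_(i < n) C i (t i).

(* Even-odd BTSP feasibility: K1 = odd cities {1,3,..} (= ordinals with even value),
   K2 = even cities. Every city's successor and predecessor lie in the other class. *)
Definition eo_feasible (n : nat) (t : {perm 'I_n}) : Prop :=
  is_tour t /\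
  forall i : 'I_n, odd (t i) != odd i /\ odd ((t^-1)%g i) != odd i.

Definition pyramidal (n : nat) (t : {perm 'I_n}) : Prop :=
  forall z : 'I_n, val z = 0%N ->
  let x (s : nat) : nat := (t ^+ s)%g z in
  exists m : nat, (m < n)%N /\
    (forall s : nat, (s < m)%N -> (x s < x s.+1)%N) /\
    (forall s : nat, (m <= s)%N -> (s.+1 < n)%N -> (x s.+1 < x s)%N).

Definition symmetric_mx (R : Type) (n : nat) (C : 'M[R]_n) : Prop :=
  forall i j, C i j = C j i.

(* Relaxed Van der Veen condition (0-based indices; shifting by one preserves
   all inequalities and parity congruences). j1 plays the role of j+1. *)
Definition relaxed_vdv (R : numDomainType) (n : nat) (C : 'M[R]_n) : Prop :=
  forall j j1 l m : 'I_n,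
    val j1 = (val j).+1 -> (val j1 < val l)%N -> (val j1 < val m)%N ->
    odd j = odd m -> odd j1 = odd l ->
    C j1 j + C l m - C j l - C j1 m <= 0.

(* Call cities a and a+1 an up pair of a tour if both are
   followed by cities beyond a+1.  The 2-opt move replacing the edges
   {a, tau a} and {a+1, tau (a+1)} by {a+1, a} and {tau (a+1), tau a} keeps the
   tour even-odd feasible, does not increase its length by the relaxed Van der
   Veen inequality, and strictly decreases sum_i |i - tau i|.  So an optimal
   tour minimising this sum has no up pair, forwards or backwards.  Then for
   every valley c > 1 (both neighbours larger) the city c-1 is a peak (both
   neighbours smaller); hence the smallest peak lies below every valley other
   than city 1, and this forces the tour, read from city 1, to be unimodal. *)

From mathcomp Require Import all_boot all_order all_algebra all_fingroup.
From mathcomp Require Import zify lra.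
Set Implicit Arguments. Unset Strict Implicit. Unset Printing Implicit Defensive.
Import Order.TTheory GRing.Theory.

Section CycleCost.
Variables (T : eqType) (V : nmodType) (f : T -> T -> V).
Local Open Scope ring_scope.

Fixpoint path_cost (x : T) (s : seq T) : V :=
  if s is y :: s' then f x y + path_cost y s' else 0.

Definition cycle_cost (s : seq T) : V :=
  if s is x :: s' then path_cost x (rcons s' x) else 0.

Lemma path_cost_cat x s1 s2 :
  path_cost x (s1 ++ s2) = path_cost x s1 + path_cost (last x s1) s2.
Proof. by elim: s1 x => [|y s IH] x /=; rewrite ?add0r // IH addrA. Qed.

Lemma path_cost_rcons x s y :
  path_cost x (rcons s y) = path_cost x s + f (last x s) y.
Proof. by rewrite -cats1 path_cost_cat /= addr0. Qed.

Lemma last_rev_belast (x : T) s : last (last x s) (rev (belast x s)) = x.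
Proof. by case: s => [|y s] //=; rewrite rev_cons last_rcons. Qed.

Lemma rev_lastI (x : T) s : rev (x :: s) = last x s :: rev (belast x s).
Proof. by rewrite lastI rev_rcons. Qed.

Hypothesis f_sym : forall x y, f x y = f y x.

Lemma path_cost_rev x s : path_cost (last x s) (rev (belast x s)) = path_cost x s.
Proof.
elim: s x => [|y s IH] x //=.
by rewrite rev_cons path_cost_rcons IH last_rev_belast f_sym addrC.
Qed.

Lemma cycle_cost_two_opt l s1 b m s2 :
  cycle_cost (l :: s1 ++ b :: m :: s2) + f b (last m s2) + f m l =
  cycle_cost (l :: s1 ++ b :: rev (m :: s2)) + f b m + f (last m s2) l.
Proof.
rewrite /cycle_cost !rcons_cat !path_cost_cat rev_lastI /= !path_cost_rcons.
rewrite path_cost_rev last_rev_belast.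
set A := path_cost l s1; set B := f (last l s1) b; set P := path_cost m s2.
rewrite -!addrA; congr (_ + (_ + _)).
rewrite addrCA [RHS]addrCA; congr (_ + _).
by rewrite addrA [RHS]addrA [RHS]addrC.
Qed.

End CycleCost.

Lemma cycle_two_opt (T : eqType) (e : rel T) (e_sym : symmetric e) l s1 b m s2 :
  path.cycle e (l :: s1 ++ b :: m :: s2) -> e b (last m s2) -> e m l ->
  path.cycle e (l :: s1 ++ b :: rev (m :: s2)).
Proof.
rewrite /= !rcons_cat !cat_path rev_lastI /= !rcons_path.
move=> /andP[-> /and3P[-> _ /andP[e_s2 _]]] e_b e_ml /=.
rewrite e_b last_rev_belast e_ml rev_path andbT.
by apply: sub_path e_s2 => x y; rewrite e_sym.
Qed.

Section PermCost.
Variables (T : finType) (V : nmodType) (f : T -> T -> V).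
Local Open Scope ring_scope.

Definition perm_cost (g : {perm T}) : V := \sum_x f x (g x).

Lemma path_cost_fpath (g : T -> T) x s :
  fpath g x s -> path_cost f x s = \sum_(y <- belast x s) f y (g y).
Proof.
elim: s x => [|y s IH] x /=; first by rewrite big_nil.
by move=> /andP[/eqP <- g_s]; rewrite big_cons IH.
Qed.

Lemma perm_cost_fcycle (g : {perm T}) s :
  uniq s -> (forall x, x \in s) -> fcycle g s -> perm_cost g = cycle_cost f s.
Proof.
move=> s_uniq s_full g_cycle.
have -> : perm_cost g = \sum_(y <- s) f y (g y).
  by rewrite big_uniq //; apply: eq_bigl => y; rewrite s_full.
case: s {s_uniq s_full} g_cycle => [|x s] /=; first by rewrite big_nil.
by move=> g_path; rewrite (path_cost_fpath g_path) belast_rcons.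
Qed.

Lemma perm_cost_inv (g : {perm T}) :
  (forall x y, f x y = f y x) -> perm_cost g^-1 = perm_cost g.
Proof.
move=> f_sym; rewrite /perm_cost (reindex_inj (@perm_inj _ g)) /=.
by apply: eq_bigr => x _; rewrite permK f_sym.
Qed.

End PermCost.

Definition cycle_perm (T : finType) (s : seq T) (s_uniq : uniq s) : {perm T} :=
  perm (can_inj (prev_next s_uniq)).

Lemma fcycle_cycle_perm (T : finType) (s : seq T) (s_uniq : uniq s) :
  fcycle (cycle_perm s_uniq) s.
Proof.
have E : frel (cycle_perm s_uniq) =2 frel (next s) by move=> x y; rewrite /= permE.
by rewrite (eq_cycle E) cycle_next.
Qed.

Lemma cycle_traject (T : eqType) (g : T -> T) z m :
  (0 < m)%N -> iter m g z = z -> fcycle g (traject g z m).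
Proof.
by case: m => [//|m] _ g_loop; rewrite /= -{3}g_loop iterSr -trajectSr fpath_traject.
Qed.

Definition parity_alt : rel nat := fun a b => odd a != odd b.

Lemma parity_alt_sym : symmetric parity_alt.
Proof. by move=> a b; rewrite /parity_alt eq_sym. Qed.

Lemma path_parity_alt_iota a k : path parity_alt a (iota a.+1 k).
Proof. by elim: k a => [|k IH] a //=; rewrite IH andbT /parity_alt /=; case: (odd a). Qed.

Lemma last_iota a k : last a (iota a.+1 k) = (a + k)%N.
Proof. by elim: k a => [|k IH] a /=; rewrite ?addn0 ?IH ?addnS. Qed.

Section Tours.
Variable n : nat.
Implicit Types (g : {perm 'I_n}) (s : seq 'I_n).

Lemma tour_traject g z : is_tour g ->
  [/\ uniq (traject g z n), forall x, x \in traject g z n & fcycle g (traject g z n)].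
Proof.
move=> g_tour; have orbit_size : #|porbit g z| = n by rewrite g_tour cardsT card_ord.
split; first by have := uniq_traject_porbit g z; rewrite orbit_size.
  by move=> x; have := porbit_traject g z x; rewrite orbit_size g_tour in_setT => <-.
have := iter_porbit g z; rewrite orbit_size; apply: cycle_traject.
exact: leq_ltn_trans (ltn_ord z).
Qed.

Lemma tour_iter_inj g z i j : is_tour g -> i < n -> j < n ->
  iter i g z = iter j g z -> i = j.
Proof.
move=> /(tour_traject z)[s_uniq _ _] lt_in lt_jn.
rewrite -(nth_traject g lt_in) -(nth_traject g lt_jn) => /eqP.
by rewrite nth_uniq ?size_traject // => /eqP.
Qed.

Lemma is_tour_fcycle g s : (forall x, x \in s) -> fcycle g s -> is_tour g.
Proof.
case: s => [nil_full _ y | x0 s s_full g_cycle y]; first by have := nil_full y.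
suff orbit_x0 : forall u, u \in porbit g x0.
  have /eqP -> : porbit g y == porbit g x0 by rewrite eq_porbit_mem orbit_x0.
  by apply/setP => u; rewrite in_setT orbit_x0.
move=> u; have : u \in rcons s x0 by rewrite mem_rcons s_full.
move: g_cycle => /= /fpathP[i ->] /trajectP[j _ ->].
by rewrite -iterSr -permX mem_porbit.
Qed.

Local Notation alt := (relpre val parity_alt).

Lemma eo_feasible_fcycle g s : (forall x, x \in s) -> fcycle g s ->
  path.cycle alt s -> eo_feasible g.
Proof.
move=> s_full g_cycle s_alt; split; first exact: is_tour_fcycle g_cycle.
have alt_g i : odd (g i) != odd i.
  have := next_cycle s_alt (s_full i).
  by rewrite (nextE g_cycle (s_full i)) /parity_alt eq_sym.
by move=> i; split; last by rewrite -{2}(permKV g i) eq_sym.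
Qed.

Lemma eo_feasible_cycle_alt g s : eo_feasible g -> fcycle g s -> path.cycle alt s.
Proof.
move=> [_ g_alt]; apply: sub_cycle => x y /eqP <-.
by rewrite /= /parity_alt eq_sym; case: (g_alt x).
Qed.

Lemma eo_feasible_inv g : eo_feasible g -> eo_feasible (g^-1)%g.
Proof.
move=> [g_tour g_alt]; split; first by move=> x; rewrite porbitV.
by move=> i; rewrite invgK; case: (g_alt i).
Qed.

Definition eo_feasibleb g : bool :=
  [forall x, porbit g x == setT] &&
  [forall i, (odd (g i) != odd i) && (odd ((g^-1)%g i) != odd i)].

Lemma eo_feasibleP g : reflect (eo_feasible g) (eo_feasibleb g).
Proof.
apply: (iffP andP) => [[/forallP tour /forallP alt] | [tour alt]].
  by split=> [x | i]; [apply/eqP | apply/andP].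
by split; apply/forallP => x; [apply/eqP | apply/andP].
Qed.

Lemma eo_feasible_exists : (0 < n)%N -> ~~ odd n -> exists g, eo_feasible g.
Proof.
move=> n_gt0 n_even; exists (cycle_perm (enum_uniq 'I_n)).
apply: (eo_feasible_fcycle _ (fcycle_cycle_perm _)) => [x | ]; first by rewrite mem_enum.
rewrite -(@cycle_map _ _ val parity_alt) val_enum_ord.
case: n n_gt0 n_even => [//|m] _ /= /negbNE m_odd.
by rewrite rcons_path path_parity_alt_iota last_iota /parity_alt /= add0n m_odd.
Qed.

End Tours.

Section Exchange.
Variable n : nat.
Local Open Scope ring_scope.
Implicit Types (g : {perm 'I_n}).

Lemma tour_cycle_from g z : is_tour g -> exists t,
  [/\ uniq (z :: t), forall x, x \in z :: t & fcycle g (z :: t)].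
Proof.
have n_gt0 : (0 < n)%N by apply: leq_ltn_trans (ltn_ord z).
have def_s : traject g z n = z :: traject g (g z) n.-1 by rewrite -trajectS prednK.
by move=> /(tour_traject z); rewrite def_s; exists (traject g (g z) n.-1).
Qed.

Lemma two_opt_perm g (a b : 'I_n) : eo_feasible g -> b = a.+1 :> nat ->
  (b < g a)%N -> (b < g b)%N ->
  exists g', eo_feasible g' /\
    forall (V : nmodType) (f : 'I_n -> 'I_n -> V), (forall x y, f x y = f y x) ->
    perm_cost f g + f b a + f (g b) (g a) = perm_cost f g' + f b (g b) + f a (g a).
Proof.
move=> [g_tour g_alt] ab_succ b_lt_ga b_lt_gb.
have [t [s_uniq s_full g_cycle]] := tour_cycle_from (g a) g_tour.
have b_in_t : b \in t.
  by move: (s_full b); rewrite inE => /predU1P[b_ga|//]; rewrite b_ga ltnn in b_lt_ga.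
case/splitPr: b_in_t s_uniq s_full g_cycle => t1 [|m t2] s_uniq s_full g_cycle.
  move: g_cycle; rewrite /= rcons_cat cat_path /= => /and4P[_ _ /eqP gb_ga _].
  by move: ab_succ; rewrite (perm_inj gb_ga) => /n_Sn.
have [gb_m g_last] : g b = m /\ g (last m t2) = g a.
  move: g_cycle; rewrite /= rcons_cat cat_path /= rcons_path.
  by case/and5P=> _ _ /eqP -> _ /eqP ->.
have last_a : last m t2 = a by apply: (perm_inj g_last).
(* Read from [g a], the tour is [g a, .., b, g b, .., a]; [w] reverses [g b, .., a]. *)
set w := g a :: t1 ++ b :: rev (m :: t2).
have w_perm : perm_eq w (g a :: t1 ++ b :: m :: t2).
  by rewrite perm_cons perm_cat2l perm_cons perm_rev.
have w_uniq : uniq w by rewrite (perm_uniq w_perm).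
have w_full x : x \in w by rewrite (perm_mem w_perm).
have w_cycle := fcycle_cycle_perm w_uniq.
exists (cycle_perm w_uniq); split=> [|V f f_sym].
  apply: eo_feasible_fcycle w_full w_cycle _.
  apply: cycle_two_opt; first exact: parity_alt_sym.
  - exact: eo_feasible_cycle_alt g_cycle.
  - by rewrite last_a /= /parity_alt ab_succ /=; case: (odd a).
  - have [ga_alt _] := g_alt a; have [gb_alt _] := g_alt b.
    by move: ga_alt gb_alt; rewrite /= /parity_alt gb_m ab_succ /=; do 2!case: odd.
rewrite (perm_cost_fcycle _ s_uniq s_full g_cycle).
rewrite (perm_cost_fcycle _ w_uniq w_full w_cycle).
by have := cycle_cost_two_opt f_sym (g a) t1 b m t2; rewrite last_a gb_m.
Qed.

End Exchange.

Definition gap n (i j : 'I_n) : nat := maxn i j - minn i j.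

Definition total_gap n (g : {perm 'I_n}) : nat := perm_cost (@gap n) g.

Definition up_pair n (g : {perm 'I_n}) : Prop :=
  exists a b : 'I_n, [/\ b = a.+1 :> nat, (b < g a)%N & (b < g b)%N].

Lemma gap_sym n (i j : 'I_n) : gap i j = gap j i.
Proof. by rewrite /gap maxnC minnC. Qed.

Section Improvement.
Variables (R : realDomainType) (n : nat) (C : 'M[R]_n).
Hypotheses (C_sym : symmetric_mx C) (C_vdv : relaxed_vdv C).
Local Open Scope ring_scope.
Implicit Types (g : {perm 'I_n}).

Lemma up_pair_improve g : eo_feasible g -> up_pair g ->
  exists g' : {perm 'I_n},
    [/\ eo_feasible g', tour_len C g' <= tour_len C g & (total_gap g' < total_gap g)%N].
Proof.
move=> g_feas [a [b [ab_succ b_lt_ga b_lt_gb]]].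
have [g' [g'_feas cost_eq]] := two_opt_perm g_feas ab_succ b_lt_ga b_lt_gb.
exists g'; split=> //.
  change (perm_cost (fun i j => C i j) g' <= perm_cost (fun i j => C i j) g).
  have [[ga_alt _] [gb_alt _]] := (g_feas.2 a, g_feas.2 b).
  have parity_a : odd a = odd (g b).
    by move: gb_alt; rewrite ab_succ /=; do 2!case: odd.
  have parity_b : odd b = odd (g a).
    by move: ga_alt; rewrite ab_succ /=; do 2!case: odd.
  have := @C_vdv a b (g a) (g b) ab_succ b_lt_ga b_lt_gb parity_a parity_b.
  have := cost_eq _ (fun i j => C i j) C_sym.
  by rewrite (C_sym (g a)); lra.
(* Since [g a] and [g b] exceed [b = a + 1], the new edges [{b, a}] and
   [{g b, g a}] have total gap [1 + |g b - g a| < (g b - b) + (g a - a)]. *)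
have : (total_gap g + gap b a + gap (g b) (g a) =
        total_gap g' + gap b (g b) + gap a (g a))%N := cost_eq _ _ (@gap_sym n).
rewrite /gap; lia.
Qed.

Lemma up_pair_inv_improve g : eo_feasible g -> up_pair (g^-1)%g ->
  exists g' : {perm 'I_n},
    [/\ eo_feasible g', tour_len C g' <= tour_len C g & (total_gap g' < total_gap g)%N].
Proof.
move=> g_feas up.
have [g' [g'_feas g'_le g'_lt]] := up_pair_improve (eo_feasible_inv g_feas) up.
exists g'; split=> //; first by rewrite -[tour_len C g](perm_cost_inv _ C_sym).
by rewrite /total_gap -[perm_cost _ g](perm_cost_inv _ (@gap_sym n)).
Qed.

End Improvement.

Lemma ascent_to_peak (X : nat -> nat) q :
  (forall i j, i <= q -> j <= q -> X i = X j -> i = j) ->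
  (0 < q -> X q.-1 < X q) ->
  (forall r, 0 < r < q -> X r < X r.-1 -> X r < X r.+1 -> X q < X r) ->
  forall s, s < q -> X s < X s.+1.
Proof.
move=> X_inj peak_l no_low_valley.
suff descent d : d < q -> X (q - d.+1) < X (q - d) <= X q.
  move=> s lt_sq; have /andP[] := descent (q - s.+1) ltac:(lia).
  by have [-> ->] : q - (q - s.+1).+1 = s /\ q - (q - s.+1) = s.+1 by lia.
elim: d => [|d IH] lt_dq; first by rewrite subn0 subn1 leqnn peak_l //; lia.
have /andP[IH1 IH2] := IH (ltnW lt_dq).
set r := q - d.+1 in IH1 IH2 *.
have [r_gt0 lt_rq] : 0 < r /\ r < q by rewrite /r; lia.
have [<- r_succ] : r.-1 = q - d.+2 /\ r.+1 = q - d by rewrite /r; lia.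
case: (ltngtP (X r.-1) (X r)) => [_ | gt_pred | eq_pred].
- lia.
- by have := no_low_valley r ltac:(lia) gt_pred; rewrite r_succ; lia.
- by have := X_inj r.-1 r ltac:(lia) ltac:(lia) eq_pred; lia.
Qed.

Lemma unimodal_of_peak (X : nat -> nat) n q : q < n ->
  (forall i j, i < n -> j < n -> X i = X j -> i = j) ->
  (0 < q -> X q.-1 < X q) -> (q.+1 < n -> X q.+1 < X q) ->
  (forall r, 0 < r -> r.+1 < n -> X r < X r.-1 -> X r < X r.+1 -> X q < X r) ->
  (forall s, s < q -> X s < X s.+1) /\ (forall s, q <= s -> s.+1 < n -> X s.+1 < X s).
Proof.
move=> lt_qn X_inj peak_l peak_r no_low_valley; split.
  apply: ascent_to_peak => // [i j le_iq le_jq | r /andP[r_gt0 lt_rq]].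
    by apply: X_inj; lia.
  by apply: no_low_valley; lia.
have [q_last | q_inner] := leqP n q.+1.
  by move=> s le_qs lt_sn; lia.
pose Y i := X (n.-1 - i).
suff Y_asc t : t < n.-1 - q -> Y t < Y t.+1.
  move=> s le_qs lt_sn; have := Y_asc (n.-1 - s.+1) ltac:(lia); rewrite /Y.
  by have [-> ->] : n.-1 - (n.-1 - s.+1) = s.+1 /\ n.-1 - (n.-1 - s.+1).+1 = s by lia.
apply: ascent_to_peak => [i j le_i le_j /X_inj | _ | r /andP[r_gt0 lt_r]]; rewrite /Y.
- by lia.
- have [-> ->] : n.-1 - (n.-1 - q).-1 = q.+1 /\ n.-1 - (n.-1 - q) = q by lia.
  exact: peak_r.
have [-> [-> ->]] : n.-1 - r.-1 = (n.-1 - r).+1 /\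
  n.-1 - r.+1 = (n.-1 - r).-1 /\ n.-1 - (n.-1 - q) = q by lia.
by move=> lt_succ lt_pred; apply: no_low_valley => //; lia.
Qed.

Section Pyramidal.
Variable n : nat.
Implicit Types (g : {perm 'I_n}) (a c : 'I_n).

Definition peak g c : bool := (g c < c) && ((g^-1)%g c < c).

Lemma no_up_pair_pred_descends g a c : ~ up_pair g -> c = a.+1 :> nat ->
  c < g c -> c < (g^-1)%g c -> g a != a -> g a < a.
Proof.
move=> no_up ac_succ c_lt_gc c_lt_gVc ga_neq.
have ga_le : g a <= c by rewrite leqNgt; apply/negP => c_lt_ga; apply: no_up; exists a, c.
have ga_neq_c : g a != c.
  by apply/eqP => ga_c; move: c_lt_gVc ac_succ; rewrite -ga_c permK; lia.
by move: ga_neq ga_neq_c; rewrite -!(inj_eq val_inj) /=; lia.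
Qed.

Lemma max_city_peak g (top : 'I_n) : eo_feasible g -> top = n.-1 :> nat -> peak g top.
Proof.
move=> [_ g_alt] top_max; have [top_alt topV_alt] := g_alt top.
have below_top c : c != top -> c < top.
  by rewrite -(inj_eq val_inj) /= top_max; have := ltn_ord c; lia.
apply/andP; split; apply: below_top.
  by apply: contra top_alt => /eqP ->.
by apply: contra topV_alt => /eqP ->.
Qed.

Lemma valley_pred_peak g a c : eo_feasible g -> ~ up_pair g -> ~ up_pair (g^-1)%g ->
  c = a.+1 :> nat -> c < g c -> c < (g^-1)%g c -> peak g a.
Proof.
move=> [_ g_alt] no_up no_up_inv ac_succ c_lt_gc c_lt_gVc.
have [ga_alt gVa_alt] := g_alt a.
apply/andP; split; apply: no_up_pair_pred_descends ac_succ _ _ _ => //.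
- by apply: contra ga_alt => /eqP ->.
- by rewrite invgK.
- by apply: contra gVa_alt => /eqP ->.
Qed.

Lemma pyramidal_of_no_up_pair g : eo_feasible g -> ~ up_pair g -> ~ up_pair (g^-1)%g ->
  pyramidal g.
Proof.
move=> g_feas no_up no_up_inv z z0 /=.
have [_ s_full _] := tour_traject z g_feas.1.
pose x i := nat_of_ord (iter i g z).
have x_0 : x 0 = 0 := z0.
have x_inj i j : i < n -> j < n -> x i = x j -> i = j.
  by move=> lt_in lt_jn /val_inj; apply: tour_iter_inj g_feas.1 lt_in lt_jn.
have g_inv_iter i : 0 < i -> (g^-1)%g (iter i g z) = iter i.-1 g z.
  by move=> i_gt0; rewrite -(prednK i_gt0) iterS permK.
have n_gt0 : 0 < n := leq_ltn_trans (leq0n _) (ltn_ord z).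
have lt_top : n.-1 < n by rewrite ltn_predL.
have top_peak := max_city_peak (top := Ordinal lt_top) g_feas erefl.
case: (arg_minnP (fun c : 'I_n => nat_of_ord c) top_peak) => A /andP[gA_lt gVA_lt] A_min.
have [q lt_qn def_A] : exists2 q, q < n & A = iter q g z by apply/trajectP.
suff [asc desc] : (forall s, s < q -> x s < x s.+1) /\
                  (forall s, q <= s -> s.+1 < n -> x s.+1 < x s).
  by exists q; split=> //; split=> s; rewrite !permX; [exact: asc | exact: desc].
apply: (unimodal_of_peak lt_qn x_inj) => [q_gt0 | _ | r r_gt0 lt_rn x_pred_gt x_succ_gt].
- by rewrite /x -g_inv_iter // -def_A.
- by rewrite /x iterS -def_A.
have c_gt0 : 0 < x r.
  by rewrite lt0n -x_0; apply/eqP => /(x_inj _ _ (ltnW lt_rn) n_gt0); lia.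
have lt_cn : (x r).-1 < n by have := ltn_ord (iter r g z); rewrite /x; lia.
have c_succ : iter r g z = (Ordinal lt_cn).+1 :> nat by rewrite /= prednK.
have c_lt_gVc : iter r g z < (g^-1)%g (iter r g z) by rewrite g_inv_iter.
have := A_min _ (valley_pred_peak g_feas no_up no_up_inv c_succ x_succ_gt c_lt_gVc).
by rewrite /x -def_A /=; lia.
Qed.

End Pyramidal.

Unset Implicit Arguments.
Local Open Scope ring_scope.

Theorem corollary3p3 (R : realDomainType) (k : nat) (C : 'M[R]_(k.*2)) :
  (0 < k)%N -> symmetric_mx C -> relaxed_vdv C ->
  exists tau : {perm 'I_(k.*2)},
    eo_feasible tau /\ pyramidal tau /\
    forall sigma : {perm 'I_(k.*2)}, eo_feasible sigma ->
      tour_len C tau <= tour_len C sigma.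
Proof.
move=> k_gt0 C_sym C_vdv.
have [g0 g0_feas] : exists g : {perm 'I_(k.*2)}, eo_feasible g.
  by apply: eo_feasible_exists; rewrite ?double_gt0 ?odd_double.
have [g1 /eo_feasibleP g1_feas g1_opt] :=
  arg_minP (tour_len C) (introT (eo_feasibleP g0) g0_feas).
pose optimal g := eo_feasibleb g && (tour_len C g <= tour_len C g1).
have g1_optimal : optimal g1 by rewrite /optimal lexx andbT; apply/eo_feasibleP.
have [t /andP[/eo_feasibleP t_feas t_le] t_min] := arg_minnP (@total_gap _) g1_optimal.
have t_gap_min g : eo_feasible g -> tour_len C g <= tour_len C t ->
    (total_gap t <= total_gap g)%N.
  move=> g_feas g_le; apply: t_min.
  by rewrite /optimal (le_trans g_le t_le) andbT; apply/eo_feasibleP.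
exists t; split=> //; split=> [|s s_feas].
  apply: pyramidal_of_no_up_pair => // up.
    have [g [g_feas g_le]] := up_pair_improve C_sym C_vdv t_feas up.
    by rewrite ltnNge t_gap_min.
  have [g [g_feas g_le]] := up_pair_inv_improve C_sym C_vdv t_feas up.
  by rewrite ltnNge t_gap_min.
by apply: le_trans t_le (g1_opt _ _); apply/eo_feasibleP.
Qed.
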